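(* Let $H$ be a canonical 2-edge-cover of a graph $G=(V,E)$ such that $H$ has $b|H|$ bridges and exactly $t|H|$ edges of $H$ belong to 2EC components of $H$ which are triangles. Assign credits as follows: each 2EC component $C$ of $H$ gets $2$ credits if it has at least 7 edges, $1$ credit if it is a triangle, and $\frac{3}{10}k$ credits if it is a $k$-cycle with $4\le k\le 6$; each connected component of $H$ that is not 2EC gets $1$ credit; each bridge of $H$ gets $\frac14$ credit; each block of $H$ gets $1$ credit. Let $cr(H)$ be the total credits and $cost(H)=|H|+cr(H)$. Then $cost(H)\le\left(\frac{13}{10}+\frac1{30}t-\frac1{20}b\right)|H|$.
   Context: A 2-edge-cover of $G=(V,E)$ is $H\subseteq E$ with every node incident to at least two edges of $H$. A graph is 2EC if connected and it stays connected after removal of any one edge; 2EC components of $H$ are components of $(V,H)$ that are 2EC. In a non-2EC component $C$ of $H$, a bridge is an edge whose removal disconnects $C$; a block is a maximal 2EC subgraph of $C$ with at least 2 nodes; a leaf block is a block incident to exactly one bridge of $C$, an inner block otherwise. $H$ is canonical if: (i) every 2EC component of $H$ is an $i$-cycle ($3\le i\le6$) or has at least 7 edges; (ii) leaf blocks have at least 6 edges and inner blocks at least 4 edges; (iii) no 2-edge-cover of the same size with fewer connected components can be obtained from $H$ by adding up to 3 edges and removing the same number of edges. *)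

(* A graph G = (V,E) is a finite vertex type T (V = all of T)
   and an edge set E : {set {set T}} of 2-element vertex sets (simple graph). *)
From HB Require Import structures.
From mathcomp Require Import all_boot all_order all_algebra.
Set Implicit Arguments. Unset Strict Implicit. Unset Printing Implicit Defensive.
Import Order.TTheory GRing.Theory Num.Theory.

Section Defs.
Variable T : finType.
Implicit Types (F H E : {set {set T}}) (S C : {set T}).

Definition simple_edges E : bool := [forall e in E, #|e| == 2].

Definition adj F : rel T := fun u v => [set u; v] \in F.
Definition conn F (x y : T) : bool := connect (adj F) x y.

Definition connectedb S F : bool :=
  [forall x in S, forall y in S, conn F x y].

Definition twoECb S F : bool :=
  connectedb S F && [forall e in F, connectedb S (F :\ e)].

Definition deg F (v : T) : nat := #|[set e in F | v \in e]|.

Definition two_edge_cover E H : bool :=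
  (H \subset E) && [forall v : T, 2 <= deg H v].

Definition comp_of H (x : T) : {set T} := [set y | conn H x y].
Definition comps H : {set {set T}} := [set comp_of H x | x : T].

Definition compE H C : {set {set T}} := [set e in H | e \subset C].

Definition twoEC_comp H C : bool := (C \in comps H) && twoECb C (compE H C).
Definition non2EC_comp H C : bool := (C \in comps H) && ~~ twoECb C (compE H C).

Definition is_cycleb S F : bool :=
  connectedb S F && [forall v in S, deg F v == 2].

Definition bridges_of H C : {set {set T}} :=
  [set e in compE H C | ~~ connectedb C (compE H C :\ e)].

Definition subgraph_of H C (p : {set T} * {set {set T}}) : bool :=
  [&& p.1 \subset C, p.2 \subset compE H C & [forall e in p.2, e \subset p.1]].

Definition is_block H C (p : {set T} * {set {set T}}) : bool :=
  [&& subgraph_of H C p, twoECb p.1 p.2, 2 <= #|p.1| &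
      [forall q : {set T} * {set {set T}},
         [&& subgraph_of H C q, twoECb q.1 q.2, p.1 \subset q.1 & p.2 \subset q.2]
         ==> (q == p)]].

Definition blocks_of H C : {set {set T} * {set {set T}}} := [set p | is_block H C p].

Definition nb_incident_bridges H C (p : {set T} * {set {set T}}) : nat :=
  #|[set e in bridges_of H C | [exists v in e, v \in p.1]]|.

Definition leaf_block H C p : bool := is_block H C p && (nb_incident_bridges H C p == 1).
Definition inner_block H C p : bool := is_block H C p && (nb_incident_bridges H C p != 1).

Definition canonical E H : Prop :=
  [/\
      (forall C, twoEC_comp H C ->
          (is_cycleb C (compE H C) && (3 <= #|C| <= 6)) || (7 <= #|compE H C|)),
      (forall C p, non2EC_comp H C ->
          (leaf_block H C p -> 6 <= #|p.2|) /\ (inner_block H C p -> 4 <= #|p.2|)) &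
      ~ (exists A R : {set {set T}},
          [/\ (A \subset E :\: H) && (R \subset H), #|A| = #|R|, #|A| <= 3,
              two_edge_cover E ((H :\: R) :|: A) &
              #|comps ((H :\: R) :|: A)| < #|comps H| ])].

Definition bridgesH H : {set {set T}} :=
  \bigcup_(C in comps H | ~~ twoECb C (compE H C)) bridges_of H C.

Definition triangle_edges H : {set {set T}} :=
  \bigcup_(C in comps H | twoECb C (compE H C) && is_cycleb C (compE H C) && (#|C| == 3))
     compE H C.

Local Open Scope ring_scope.

Definition credit2EC H C : rat :=
  let k := #|C| in
  if (7 <= #|compE H C|)%N then 2
  else if is_cycleb C (compE H C) && (k == 3)%N then 1
  else if is_cycleb C (compE H C) && (4 <= k <= 6)%N then (3%:R / 10%:R) * k%:R
  else 0.

Definition cr H : rat :=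
  (\sum_(C in comps H | twoECb C (compE H C)) credit2EC H C)
  + (#|[set C in comps H | ~~ twoECb C (compE H C)]|)%:R
  + (#|bridgesH H|)%:R / 4%:R
  + (\sum_(C in comps H | ~~ twoECb C (compE H C)) (#|blocks_of H C|)%:R).

Definition cost H : rat := (#|H|)%:R + cr H.

End Defs.

From HB Require Import structures.
From mathcomp Require Import all_boot all_order all_algebra.
From mathcomp Require Import zify ring lra.
Import Order.TTheory GRing.Theory Num.Theory.
Set Implicit Arguments. Unset Strict Implicit. Unset Printing Implicit Defensive.

(* Each component C of H pays for its own credits out of its edges: the credits
   of C plus 3/10 per bridge of C are at most 3/10 |E(C)|, plus |E(C)|/30 if C
   is a triangle.  For a 2EC component this is a case check on its credit, a
   k-cycle having k edges.  In a non-2EC component the blocks are edge-disjoint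
   and bridge-free, each has at least 4 edges, and there are two distinct leaf
   blocks (reached by walking along bridges into ever smaller sides), which have
   at least 6; so 4 #blocks + 4 + #bridges <= |E(C)|, which suffices.  Summing
   over the components, the 1/4 credit of a bridge against the 3/10 it saves
   leaves -1/20 per bridge. *)

Section Connectivity.
Variable T : finType.
Implicit Types (F : {set {set T}}) (S : {set T}) (a b x y : T).

Lemma adj_sym F : symmetric (adj F).
Proof. by move=> u v; rewrite /adj setUC. Qed.

Lemma conn0 F x : conn F x x.
Proof. exact: connect0. Qed.

Lemma conn1 F x y : adj F x y -> conn F x y.
Proof. exact: connect1. Qed.

Lemma conn_trans F y x z : conn F x y -> conn F y z -> conn F x z.
Proof. exact: connect_trans. Qed.

Lemma conn_sym F x y : conn F x y = conn F y x.
Proof. exact: (sym_connect_sym (adj_sym F)). Qed.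

Lemma conn_sub F1 F2 x y : F1 \subset F2 -> conn F1 x y -> conn F2 x y.
Proof.
move=> sF; apply: connect_sub => u v a; apply: connect1.
by rewrite /adj (subsetP sF).
Qed.

Lemma conn_closed F S x y :
  (forall u v, u \in S -> adj F u v -> v \in S) ->
  conn F x y -> x \in S -> y \in S.
Proof.
move=> hS /connectP[p pth ->]; elim: p x pth => //= v p IH x /andP[a pth] xS.
exact: IH pth (hS _ _ xS a).
Qed.

Lemma conn_compE F S x y :
  (forall u v, u \in S -> adj F u v -> v \in S) ->
  conn F x y -> x \in S -> conn (compE F S) x y.
Proof.
move=> hS /connectP[p pth ->]; elim: p x pth => /= [|v p IH] x.
  by move=> _ _; apply: conn0.
move=> /andP[a pth] xS; have vS := hS _ _ xS a.
apply: conn_trans (IH _ pth vS); apply: conn1.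
by move: a; rewrite /adj !inE => ->; rewrite subUset !sub1set xS vS.
Qed.

Lemma conn_confined F F' x y :
  (forall u v, conn F' x u -> adj F u v -> adj F' u v) ->
  conn F x y -> conn F' x y.
Proof.
move=> hF hxy; have: y \in [set u | conn F' x u].
  apply: conn_closed hxy _; last by rewrite inE; apply: conn0.
  by move=> u v; rewrite !inE => xu /(hF _ _ xu) /conn1; apply: conn_trans.
by rewrite inE.
Qed.

Lemma conn_setD1_edge F a b x y :
  conn (F :\ [set a; b]) a b -> conn F x y -> conn (F :\ [set a; b]) x y.
Proof.
move=> hab hxy; have: y \in [set w | conn (F :\ [set a; b]) x w].
  apply: conn_closed hxy _; last by rewrite inE; apply: conn0.
  move=> u v; rewrite !inE => xu auv; apply: conn_trans xu _.
  have [e|e] := eqVneq [set u; v] [set a; b]; last first.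
    by apply: conn1; rewrite /adj !inE e.
  have: u \in [set a; b] by rewrite -e !inE eqxx.
  have: v \in [set a; b] by rewrite -e !inE eqxx orbT.
  by move=> /set2P[]-> /set2P[]->; rewrite ?conn0 // conn_sym.
by rewrite inE.
Qed.

Lemma connectedbP S F :
  reflect (forall x y, x \in S -> y \in S -> conn F x y) (connectedb S F).
Proof.
apply: (iffP idP).
  by move=> /forall_inP h x y xS yS; move: (h x xS) => /forall_inP; apply.
by move=> h; apply/forall_inP=> x xS; apply/forall_inP=> y yS; apply: h.
Qed.

Lemma connectedb_setD1_edge S F a b :
  connectedb S F -> conn (F :\ [set a; b]) a b -> connectedb S (F :\ [set a; b]).
Proof.
move=> /connectedbP h hab; apply/connectedbP=> x y xS yS.
exact: conn_setD1_edge hab (h _ _ xS yS).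
Qed.

Lemma connectedb_sub S F1 F2 :
  F1 \subset F2 -> connectedb S F1 -> connectedb S F2.
Proof.
move=> s /connectedbP h; apply/connectedbP=> x y xS yS.
exact: conn_sub s (h _ _ xS yS).
Qed.

Lemma twoECb_connectedD1 S F e : twoECb S F -> connectedb S (F :\ e).
Proof.
move=> /andP[c /forall_inP r]; have [/r//|eF] := boolP (e \in F).
apply: connectedb_sub c; apply/subsetP=> f fF; rewrite !inE fF andbT.
by apply: contraNneq eF => <-.
Qed.

Lemma connectedb_union S1 S2 F1 F2 F x :
  connectedb S1 F1 -> connectedb S2 F2 -> x \in S1 -> x \in S2 ->
  F1 \subset F -> F2 \subset F -> connectedb (S1 :|: S2) F.
Proof.
move=> /connectedbP c1 /connectedbP c2 x1 x2 s1 s2.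
have hx u : u \in S1 :|: S2 -> conn F x u.
  by rewrite inE => /orP[] uS; [apply: conn_sub s1 (c1 _ _ x1 uS)
                                 | apply: conn_sub s2 (c2 _ _ x2 uS)].
apply/connectedbP=> u v uS vS; apply: conn_trans (hx _ vS).
by rewrite conn_sym; apply: hx.
Qed.

Lemma twoECb_union S1 S2 F1 F2 x :
  twoECb S1 F1 -> twoECb S2 F2 -> x \in S1 -> x \in S2 ->
  twoECb (S1 :|: S2) (F1 :|: F2).
Proof.
move=> t1 t2 x1 x2; apply/andP; split.
  by apply: connectedb_union (proj1 (andP t1)) (proj1 (andP t2)) x1 x2 _ _;
    rewrite ?subsetUl ?subsetUr.
apply/forall_inP=> h _.
apply: connectedb_union (twoECb_connectedD1 h t1) (twoECb_connectedD1 h t2) x1 x2 _ _;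
  by apply: setSD; rewrite ?subsetUl ?subsetUr.
Qed.

End Connectivity.

Section Components.
Variables (T : finType) (H : {set {set T}}).
Implicit Types (C D : {set T}) (u v x : T).

Lemma comps_conn C u v : C \in comps H -> u \in C -> v \in C -> conn H u v.
Proof.
move=> /imsetP[x _ ->]; rewrite !inE => xu xv.
by apply: conn_trans xv; rewrite conn_sym.
Qed.

Lemma comps_closed C u v : C \in comps H -> u \in C -> adj H u v -> v \in C.
Proof.
move=> /imsetP[x _ ->]; rewrite !inE => xu a.
exact: conn_trans xu (conn1 a).
Qed.

Lemma comps_adj_compE C u v :
  C \in comps H -> u \in C -> adj H u v -> [set u; v] \in compE H C.
Proof.
move=> hC uC a; have vC := comps_closed hC uC a.
by move: a; rewrite /adj inE => ->; rewrite subUset !sub1set uC vC.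
Qed.

Lemma comps_connected C : C \in comps H -> connectedb C (compE H C).
Proof.
move=> hC; apply/connectedbP=> u v uC vC.
by apply: conn_compE (comps_conn hC uC vC) uC => a b; apply: comps_closed.
Qed.

Lemma comps_eq C D x : C \in comps H -> D \in comps H -> x \in C -> x \in D -> C = D.
Proof.
move=> /imsetP[c _ ->] /imsetP[d _ ->]; rewrite !inE => cx dx.
apply/setP=> y; rewrite !inE; apply/idP/idP => h.
  by apply: conn_trans dx _; apply: conn_trans h; rewrite conn_sym.
by apply: conn_trans cx _; apply: conn_trans h; rewrite conn_sym.
Qed.

Lemma compE_disjoint C D e :
  (forall e, e \in H -> #|e| = 2) -> C \in comps H -> D \in comps H ->
  e \in compE H C -> e \in compE H D -> C = D.
Proof.
move=> hE2 hC hD; rewrite !inE => /andP[eH eC] /andP[_ eD].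
have [a [b [_ eab]]] := cards2P _ (introT eqP (hE2 _ eH)).
have ae : a \in e by rewrite eab !inE eqxx.
exact: comps_eq hC hD (subsetP eC _ ae) (subsetP eD _ ae).
Qed.

End Components.

Section Blocks.
Variables (T : finType) (H : {set {set T}}) (C : {set T}).
Hypothesis hE2 : forall e, e \in H -> #|e| = 2.
Hypothesis hC : C \in comps H.
Local Notation G := (compE H C).

Lemma compE_card2 e : e \in G -> #|e| = 2.
Proof. by rewrite inE => /andP[/hE2]. Qed.

Lemma bridge_disconnects z w :
  [set z; w] \in bridges_of H C -> ~~ conn (G :\ [set z; w]) z w.
Proof.
rewrite inE => /andP[_]; apply: contra => c.
exact: connectedb_setD1_edge (comps_connected hC) c.
Qed.

Lemma bridges_of_compE f : f \in bridges_of H C -> f \in G.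
Proof. by rewrite inE => /andP[]. Qed.

Lemma twoECb_bridges0 : twoECb C G -> bridges_of H C = set0.
Proof.
move=> /andP[_ /forall_inP r]; apply/setP=> e; rewrite in_set0 inE.
by apply/negbTE; rewrite negb_and negbK -implybE; apply/implyP => /r.
Qed.

Lemma block_edge_nonbridge p e : is_block H C p -> e \in p.2 -> e \notin bridges_of H C.
Proof.
case/and4P=> /and3P[_ s2 /forall_inP s3] tw _ _ ep.
have eG : e \in G := subsetP s2 _ ep.
have [a [b [_ eab]]] := cards2P _ (introT eqP (compE_card2 eG)).
have aP : a \in p.1 by apply: (subsetP (s3 _ ep)); rewrite eab !inE eqxx.
have bP : b \in p.1 by apply: (subsetP (s3 _ ep)); rewrite eab !inE eqxx orbT.
have /connectedbP c := twoECb_connectedD1 e tw.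
have cab : conn (G :\ e) a b := conn_sub (setSD _ s2) (c _ _ aP bP).
rewrite inE eG /= negbK eab; rewrite eab in cab.
exact: connectedb_setD1_edge (comps_connected hC) cab.
Qed.

(* The union of two blocks sharing an edge is a 2EC subgraph, so maximality
   forces both blocks to equal it. *)
Lemma blocks_edge_disjoint p q e :
  is_block H C p -> is_block H C q -> e \in p.2 -> e \in q.2 -> p = q.
Proof.
move=> /and4P[/and3P[p1 p2 /forall_inP p3] tp _ /forall_inP mp].
move=> /and4P[/and3P[q1 q2 /forall_inP q3] tq _ /forall_inP mq] ep eq.
pose r := (p.1 :|: q.1, p.2 :|: q.2).
have [a [b [_ eab]]] := cards2P _ (introT eqP (compE_card2 (subsetP p2 _ ep))).
have aP : a \in p.1 by apply: (subsetP (p3 _ ep)); rewrite eab !inE eqxx.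
have aQ : a \in q.1 by apply: (subsetP (q3 _ eq)); rewrite eab !inE eqxx.
have sr : subgraph_of H C r.
  apply/and3P; split => /=; rewrite ?subUset ?p1 ?q1 ?p2 ?q2 //.
  by apply/forall_inP => f; rewrite inE => /orP[] /[dup] fr;
    [move/p3 | move/q3] => /subset_trans; apply; rewrite ?subsetUl ?subsetUr.
have tr : twoECb r.1 r.2 := twoECb_union tp tq aP aQ.
have /eqP rp : r == p by apply: mp; rewrite sr tr /= !subsetUl.
have /eqP rq : r == q by apply: mq; rewrite sr tr /= !subsetUr.
by rewrite -rp -rq.
Qed.

(* Take a 2EC extension of [p] maximising [#|nodes| + #|edges|]. *)
Lemma block_extend p : subgraph_of H C p -> twoECb p.1 p.2 -> 2 <= #|p.1| ->
  exists2 q, is_block H C q & p.1 \subset q.1.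
Proof.
move=> sp tp cp.
pose P q := [&& subgraph_of H C q, twoECb q.1 q.2, p.1 \subset q.1 & p.2 \subset q.2].
have Pp : P p by rewrite /P sp tp !subxx.
have [q /and4P[sq tq q1 q2] qmax] :=
  arg_maxnP (fun q : {set T} * {set {set T}} => #|q.1| + #|q.2|) Pp.
exists q => //; apply/and4P; split => //; first exact: leq_trans cp (subset_leq_card q1).
apply/forall_inP => q' /and4P[sq' tq' s1 s2].
have /qmax : P q' by rewrite /P sq' tq' (subset_trans q1 s1) (subset_trans q2 s2).
have [l1 e1] := subset_leqif_cards s1; have [l2 e2] := subset_leqif_cards s2.
move=> hle; rewrite eq_sym -pair_eqE /pair_eq /= -e1 -e2 !eqn_leq l1 l2 /=.
by apply/andP; split; [rewrite -(leq_add2r #|q'.2|) | rewrite -(leq_add2l #|q'.1|)];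
  apply: leq_trans hle _; rewrite ?leq_add2l ?leq_add2r.
Qed.

End Blocks.

Section LeafBlocks.
Variables (T : finType) (H : {set {set T}}) (C : {set T}).
Hypothesis hE2 : forall e, e \in H -> #|e| = 2.
Hypothesis hdeg : forall v, 2 <= deg H v.
Hypothesis hC : C \in comps H.
Local Notation G := (compE H C).

Definition side f z := [set u | conn (G :\ f) z u].

Lemma side_self f z : z \in side f z.
Proof. by rewrite inE conn0. Qed.

Lemma side_closed f z u v : u \in side f z -> adj (G :\ f) u v -> v \in side f z.
Proof. by rewrite !inE => h a; apply: conn_trans h (conn1 a). Qed.

Lemma side_sub f z : z \in C -> side f z \subset C.
Proof.
move=> zC; apply/subsetP => u; rewrite inE => zu.
apply: (conn_closed _ zu zC) => a b _; rewrite /adj in_setD1 => /andP[_].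
by rewrite inE => /andP[_ /subsetP]; apply; rewrite !inE eqxx orbT.
Qed.

Lemma bridge_other_side z w :
  [set z; w] \in bridges_of H C -> w \notin side [set z; w] z.
Proof. by move=> fbr; rewrite inE; apply: (bridge_disconnects hC fbr). Qed.

(* By [hdeg], [z] has a second edge, whose other end lies on the side of [z]. *)
Lemma side_card z w : [set z; w] \in G -> 2 <= #|side [set z; w] z|.
Proof.
move=> fG; have zC : z \in C.
  by move: fG; rewrite inE => /andP[_ /subsetP]; apply; rewrite !inE eqxx.
have : ~~ ([set e in H | z \in e] \subset [set [set z; w]]).
  by apply/negP => /subset_leq_card; rewrite cards1 => /(leq_trans (hdeg z)).
case/subsetPn => e; rewrite !inE => /andP[eH ze] ef.
have [a [b [ab eab]]] := cards2P _ (introT eqP (hE2 eH)).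
have [z' [zz' ez']] : exists z', z != z' /\ e = [set z; z'].
  by move: ze; rewrite eab => /set2P[]->; [exists b | exists a; rewrite eq_sym setUC].
have hzz' : adj H z z' by rewrite /adj -ez'.
apply/card_gt1P; exists z, z'; split; rewrite ?side_self //.
apply: side_closed (side_self _ _) _.
by rewrite /adj in_setD1 (comps_adj_compE hC zC hzz') -ez' ef.
Qed.

(* A path avoiding a non-bridge [h] can leave [Z] only through [z], so the
   part of [Z] reachable from a node without [h] either contains [z] or
   contains everything that node reaches in [G :\ h]. *)
Lemma side_twoECb z w :
  [set z; w] \in bridges_of H C ->
  (forall g, g \in bridges_of H C -> ~~ (g \subset side [set z; w] z)) ->
  twoECb (side [set z; w] z) (compE G (side [set z; w] z)).
Proof.
set f := [set z; w] => fbr nob; set Z := side f z; set P := compE G Z.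
have wZ : w \notin Z := bridge_other_side fbr.
have ZC : Z \subset C.
  apply: side_sub; move: fbr; rewrite !inE => /andP[/andP[_ /subsetP fC] _].
  by apply: fC; rewrite /f !inE eqxx.
have PZ u v : u \in Z -> adj P u v -> v \in Z.
  by move=> _; rewrite /adj inE => /andP[_ /subsetP]; apply; rewrite !inE eqxx orbT.
have cP u v : u \in Z -> v \in Z -> conn P u v.
  move=> uZ vZ; have cuv : conn (G :\ f) u v.
    by move: uZ vZ; rewrite !inE => uZ; apply: conn_trans; rewrite conn_sym.
  apply: conn_sub (conn_compE (fun a b aZ => side_closed aZ) cuv uZ).
  by apply/subsetP => e; rewrite !inE => /andP[/andP[_ ->] ->].
apply/andP; split; first exact/connectedbP.
apply/forall_inP => h; rewrite inE => /andP[hG hZ].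
have [a [b [_ eab]]] := cards2P _ (introT eqP (compE_card2 hE2 hG)).
have aZ : a \in Z by apply: (subsetP hZ); rewrite eab !inE eqxx.
have bZ : b \in Z by apply: (subsetP hZ); rewrite eab !inE eqxx orbT.
have cab : conn (G :\ h) a b.
  have : h \notin bridges_of H C by apply: contraL hZ; apply: nob.
  by rewrite inE hG /= negbK => /connectedbP; apply; apply: (subsetP ZC).
have cut c d : c \in Z -> ~~ conn (P :\ h) c z -> conn (G :\ h) c d -> conn (P :\ h) c d.
  move=> cZ nz; apply: conn_confined => u v cu; rewrite /adj !in_setD1 => /andP[uvh uvG].
  have uZ : u \in Z.
    by apply: conn_closed cu cZ => x y xZ; rewrite /adj in_setD1 => /andP[_]; apply: PZ.
  have [e|e] := eqVneq [set u; v] f.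
    have : u \in f by rewrite -e !inE eqxx.
    by case/set2P => ?; subst u; [rewrite cu in nz | rewrite uZ in wZ].
  have vZ : v \in Z by apply: side_closed uZ _; rewrite /adj in_setD1 e.
  by rewrite uvh /P inE uvG subUset !sub1set uZ vZ.
have cab' : conn (P :\ h) a b.
  have [az|] := boolP (conn (P :\ h) a z); last by move/cut; apply.
  have [bz|bnz] := boolP (conn (P :\ h) b z).
    by apply: conn_trans az _; rewrite conn_sym.
  by rewrite conn_sym; apply: cut; rewrite // conn_sym.
rewrite eab; apply: connectedb_setD1_edge; first exact/connectedbP.
by rewrite -eab.
Qed.

Lemma leaf_block_bridgefree_side z w :
  [set z; w] \in bridges_of H C ->
  (forall g, g \in bridges_of H C -> ~~ (g \subset side [set z; w] z)) ->
  exists2 p, leaf_block H C p & p.1 \subset side [set z; w] z.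
Proof.
set f := [set z; w] => fbr nob; set Z := side f z.
have fG := bridges_of_compE fbr.
have sZ : subgraph_of H C (Z, compE G Z).
  apply/and3P; split => /=; last by apply/forall_inP => e; rewrite inE => /andP[].
    apply: side_sub; move: fG; rewrite inE => /andP[_ /subsetP].
    by apply; rewrite /f !inE eqxx.
  by apply/subsetP => e; rewrite inE => /andP[].
have [q bq Zq] := block_extend sZ (side_twoECb fbr nob) (side_card fG).
have zq : z \in q.1 := subsetP Zq _ (side_self _ _).
have qZ : q.1 \subset Z.
  move: (bq) => /and4P[/and3P[_ q2 _] /(twoECb_connectedD1 f) /connectedbP cq _ _].
  by apply/subsetP => v vq; rewrite inE; apply: conn_sub (setSD _ q2) (cq _ _ zq vq).
exists q => //; apply/andP; split => //; rewrite /nb_incident_bridges.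
suff -> : [set e in bridges_of H C | [exists v in e, v \in q.1]] = [set f] by rewrite cards1.
apply/setP => g; rewrite in_set1; apply/idP/idP; last first.
  by move/eqP ->; rewrite inE fbr; apply/exists_inP; exists z; rewrite // /f !inE eqxx.
case/setIdP => gbr /exists_inP[v vg vq]; apply/negPn/negP => gf.
have gG := bridges_of_compE gbr.
have [a [b [_ gab]]] := cards2P _ (introT eqP (compE_card2 hE2 gG)).
have [v' gv'] : exists v', g = [set v; v'].
  by move: vg; rewrite gab => /set2P[]->; [exists b | exists a; rewrite setUC].
have vZ := subsetP qZ _ vq.
have v'Z : v' \in Z by apply: side_closed vZ _; rewrite /adj in_setD1 -gv' gf gG.
by move: (nob g gbr); rewrite gv' subUset !sub1set vZ v'Z.
Qed.

Lemma side_shrink z w a b :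
  [set z; w] \in bridges_of H C ->
  a \in side [set z; w] z -> b \in side [set z; w] z ->
  z \notin side [set b; a] b -> a \notin side [set b; a] b ->
  side [set b; a] b \proper side [set z; w] z.
Proof.
move=> fbr aZ bZ zn an; have wZ := bridge_other_side fbr.
apply/properP; split; last by exists a.
apply/subsetP => v; rewrite [v \in side _ b]inE => vB.
suff : v \in side [set z; w] z :&: side [set b; a] b by rewrite inE => /andP[].
apply: conn_closed vB _; last by rewrite inE bZ side_self.
move=> u x; rewrite inE => /andP[uZ uB] ux.
rewrite inE (side_closed uB ux) andbT.
have uxG : [set u; x] \in G by move: ux; rewrite /adj inE => /andP[].
have [e|e] := eqVneq [set u; x] [set z; w].
  have : u \in [set z; w] by rewrite -e !inE eqxx.
  by case/set2P => ?; subst u; [rewrite uB in zn | rewrite uZ in wZ].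
by apply: side_closed uZ _; rewrite /adj in_setD1 e uxG.
Qed.

(* Descend along bridges into ever smaller sides until the side is bridge-free. *)
Lemma leaf_block_in_side z w :
  [set z; w] \in bridges_of H C ->
  exists2 p, leaf_block H C p & p.1 \subset side [set z; w] z.
Proof.
move: {2}#|_| (leqnn #|side [set z; w] z|) => n; elim: n z w => [|n IH] z w cn fbr.
  move: cn; rewrite leqn0 cards_eq0 => /eqP Z0.
  by move: (side_self [set z; w] z); rewrite Z0 inE.
have [/exists_inP[g gbr gZ]|nex] :=
  boolP [exists g in bridges_of H C, g \subset side [set z; w] z]; last first.
  apply: leaf_block_bridgefree_side => // g gbr; apply: contra nex => gZ.
  by apply/exists_inP; exists g.
have [a [b [ab gab]]] := cards2P _ (introT eqP (compE_card2 hE2 (bridges_of_compE gbr))).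
subst g; have gbr' : [set b; a] \in bridges_of H C by rewrite setUC.
have aZ : a \in side [set z; w] z by apply: (subsetP gZ); rewrite !inE eqxx.
have bZ : b \in side [set z; w] z by apply: (subsetP gZ); rewrite !inE eqxx orbT.
have descend x y : [set y; x] \in bridges_of H C ->
    x \in side [set z; w] z -> y \in side [set z; w] z ->
    z \notin side [set y; x] y -> x \notin side [set y; x] y ->
    exists2 p, leaf_block H C p & p.1 \subset side [set z; w] z.
  move=> ybr xZ yZ zn xn; have pr := side_shrink fbr xZ yZ zn xn.
  have [p lp sp] := IH y x (leq_trans (proper_card pr) cn) ybr.
  by exists p => //; apply: subset_trans sp (proper_sub pr).
have [zb|zb] := boolP (z \in side [set a; b] b).
  apply: (descend b a gbr bZ aZ _ (bridge_other_side gbr)).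
  apply: contraNN (bridge_disconnects hC gbr); move: zb; rewrite !inE => zb za.
  by apply: conn_trans za _; rewrite conn_sym.
rewrite setUC in zb.
exact: (descend a b gbr' aZ bZ zb (bridge_other_side gbr')).
Qed.

Lemma two_leaf_blocks : ~~ twoECb C G ->
  exists p q, [/\ leaf_block H C p, leaf_block H C q & p != q].
Proof.
rewrite /twoECb comps_connected //= => /forall_inPn[f fG nc].
have fbr : f \in bridges_of H C by rewrite inE fG nc.
have [z [w [_ fzw]]] := cards2P _ (introT eqP (compE_card2 hE2 fG)); subst f.
have [p lp sp] := leaf_block_in_side fbr.
have fbr' : [set w; z] \in bridges_of H C by rewrite setUC.
have [q lq sq] := leaf_block_in_side fbr'.
exists p, q; split => //; apply/eqP => epq; subst q.
move: lp => /andP[/and4P[_ _ /card_gt1P[u [_ [up _ _]]] _] _].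
move: (subsetP sp _ up) (subsetP sq _ up); rewrite !inE [[set w; z]]setUC => zu wu.
by move/negP: (bridge_disconnects hC fbr); apply; apply: conn_trans zu _; rewrite conn_sym.
Qed.

End LeafBlocks.

Lemma card_sum_mem (U : finType) (A B : {set U}) :
  B \subset A -> #|B| = \sum_(x in A) (x \in B).
Proof.
move=> sBA; rewrite [RHS](big_setID B) /= (setIidPr sBA) [X in _ + X]big1 => [|x].
  by rewrite addn0 -sum1_card; apply: eq_bigr => x ->.
by rewrite !inE => /andP[/negbTE ->].
Qed.

Lemma leq_sum_card_disjoint (I U : finType) (P : pred I) (F : I -> {set U}) (A : {set U}) :
  (forall i, P i -> F i \subset A) ->
  (forall i j x, P i -> P j -> x \in F i -> x \in F j -> i = j) ->
  \sum_(i | P i) #|F i| <= #|A|.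
Proof.
move=> sA uq; rewrite (eq_bigr (fun i => \sum_(x in A) (x \in F i))); last first.
  by move=> i /sA /card_sum_mem.
rewrite exchange_big /= -sum1_card; apply: leq_sum => x _.
have [i0 /andP[P0 x0]|none] := pickP (fun i => P i && (x \in F i)).
  rewrite (bigD1 i0) //= x0 big1 // => j /andP[Pj ji].
  by case xj: (x \in F j); rewrite // (uq _ _ _ Pj P0 xj x0) eqxx in ji.
by rewrite big1 // => j Pj; have := none j; rewrite Pj; case: (x \in F j).
Qed.

Lemma card_bigcup_le (I U : finType) (P : pred I) (F : I -> {set U}) :
  #|\bigcup_(i | P i) F i| <= \sum_(i | P i) #|F i|.
Proof.
elim/big_rec2: _ => [|i n S _ le]; first by rewrite cards0.
by rewrite (leq_trans (leq_card_setU (F i) S).1) ?leq_add2l.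
Qed.

Lemma card_edges_2regular (U : finType) (F : {set {set U}}) (S : {set U}) :
  (forall e, e \in F -> e \subset S /\ #|e| = 2) ->
  (forall v, v \in S -> deg F v = 2) -> #|F| = #|S|.
Proof.
move=> hF hS; apply/eqP; rewrite -(eqn_pmul2l (isT : 0 < 2)); apply/eqP.
have -> : 2 * #|F| = \sum_(e in F) \sum_(v in S) (v \in e).
  rewrite -sum1_card big_distrr /=; apply: eq_bigr => e /hF[/card_sum_mem <- ->].
  by [].
rewrite exchange_big /= -sum1_card big_distrr /=; apply: eq_bigr => v /hS.
rewrite muln1 /deg => <-; rewrite (@card_sum_mem _ F); last first.
  by apply/subsetP => e; rewrite inE => /andP[].
by apply: eq_bigr => e eF; rewrite inE eF.
Qed.

Section Credits.
Variables (T : finType) (H : {set {set T}}).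
Hypothesis hE2 : forall e, e \in H -> #|e| = 2.
Hypothesis hdeg : forall v, 2 <= deg H v.
Hypothesis hblock : forall C p, non2EC_comp H C ->
  (leaf_block H C p -> 6 <= #|p.2|) /\ (inner_block H C p -> 4 <= #|p.2|).
Implicit Type C : {set T}.

Definition triangle_comp C : bool :=
  twoECb C (compE H C) && is_cycleb C (compE H C) && (#|C| == 3).

Lemma non2EC_edge_count C : C \in comps H -> ~~ twoECb C (compE H C) ->
  4 * #|blocks_of H C| + 4 + #|bridges_of H C| <= #|compE H C|.
Proof.
move=> hC n2; have nC : non2EC_comp H C by rewrite /non2EC_comp hC n2.
set G := compE H C; set B := blocks_of H C.
have brG : bridges_of H C \subset G by apply/subsetP => e; rewrite inE => /andP[].
have ub : \sum_(p in B) #|p.2| <= #|G| - #|bridges_of H C|.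
  rewrite -cardsDS //; apply: leq_sum_card_disjoint => [p|p q e]; rewrite ?in_set.
    move=> bp; apply/subsetP => e ep; rewrite inE (block_edge_nonbridge hE2 hC bp ep).
    by move: bp => /and4P[/and3P[_ /subsetP -> //] _ _ _].
  by move=> bp bq ep eq; exact: (blocks_edge_disjoint hE2 bp bq ep eq).
have [p1 [p2 [l1 l2 p12]]] := two_leaf_blocks hE2 hdeg hC n2.
have size_lb p : p \in B -> 4 + 2 * (p == p1) + 2 * (p == p2) <= #|p.2|.
  rewrite inE => bp; have [->|n1] := eqVneq p p1.
    by rewrite (negbTE p12) muln0 addn0; apply: (hblock _ nC).1.
  have [->|n2'] := eqVneq p p2.
    by rewrite muln0 addn0; apply: (hblock _ nC).1.
  have [hleaf hinner] := hblock p nC.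
  rewrite !muln0 !addn0; have [nb1|nb1] := eqVneq (nb_incident_bridges H C p) 1.
    have lp : leaf_block H C p by rewrite /leaf_block bp nb1.
    exact: ltnW (ltnW (hleaf lp)).
  by apply: hinner; rewrite /inner_block bp nb1.
have ind q : q \in B -> \sum_(p in B) (p == q) = 1.
  by move=> bq; rewrite (bigD1 q) //= eqxx big1 // => p /andP[_ /negbTE ->].
have lb : \sum_(p in B) (4 + 2 * (p == p1) + 2 * (p == p2)) <= \sum_(p in B) #|p.2|.
  exact: leq_sum size_lb.
have bl1 : p1 \in B by rewrite inE; case/andP: l1.
have bl2 : p2 \in B by rewrite inE; case/andP: l2.
rewrite !big_split /= sum_nat_const !big1_eq !ind // in lb.
move: (leq_trans lb ub) (subset_leq_card brG).
by move: #|B| #|G| #|bridges_of H C| => nb g br; lia.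
Qed.

Lemma sum_compE_le : \sum_(C in comps H) #|compE H C| <= #|H|.
Proof.
apply: leq_sum_card_disjoint => [C _|C D e hC hD]; last exact: compE_disjoint.
by apply/subsetP => e; rewrite inE => /andP[].
Qed.

Lemma sum_triangle_compE_le :
  \sum_(C in comps H | triangle_comp C) #|compE H C| <= #|triangle_edges H|.
Proof.
apply: leq_sum_card_disjoint => [C|C D e /andP[hC _] /andP[hD _]].
  by move=> /andP[hC tC]; apply: (bigcup_sup C); apply/andP.
exact: compE_disjoint.
Qed.

Lemma card_bridgesH_le : #|bridgesH H| <= \sum_(C in comps H) #|bridges_of H C|.
Proof.
rewrite [leqRHS](bigID (fun C => twoECb C (compE H C))) /=.
exact: leq_trans (card_bigcup_le _ _) (leq_addl _ _).
Qed.

Local Open Scope ring_scope.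

Lemma credit2EC_le C : twoECb C (compE H C) ->
  credit2EC H C <= 3%:R / 10%:R * #|compE H C|%:R
                   + (if triangle_comp C then #|compE H C|%:R / 30%:R else 0).
Proof.
move=> tw; have cycle_card : is_cycleb C (compE H C) -> #|compE H C| = #|C|.
  move=> /andP[_ /forall_inP d]; apply: card_edges_2regular => [e eG|v vC].
    by rewrite (compE_card2 hE2 eG); move: eG; rewrite inE => /andP[_ ->].
  exact/eqP/d.
have E0 := ler0n rat #|compE H C|; have C0 := ler0n rat #|C|.
rewrite /credit2EC /triangle_comp tw /=; case: ifP => [h7|_].
  by rewrite -(ler_nat rat) in h7; case: ifP => _; lra.
have [cy|_] := boolP (is_cycleb C (compE H C)); rewrite /=; last by lra.
by rewrite (cycle_card cy); case: eqP => [->|_]; [lra | case: ifP => _; lra].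
Qed.

Definition comp_credit C : rat :=
  if twoECb C (compE H C) then credit2EC H C else 1 + #|blocks_of H C|%:R.

Lemma comp_credit_le C : C \in comps H ->
  comp_credit C <= 3%:R / 10%:R * (#|compE H C|%:R - #|bridges_of H C|%:R)
                   + (if triangle_comp C then #|compE H C|%:R / 30%:R else 0).
Proof.
move=> hC; rewrite /comp_credit; case: ifP => tw.
  by rewrite (twoECb_bridges0 tw) cards0 subr0; apply: credit2EC_le.
have := non2EC_edge_count hC (negbT tw); rewrite -(ler_nat rat) !natrD.
have := ler0n rat #|blocks_of H C|.
by rewrite /triangle_comp tw /=; lra.
Qed.

Lemma cr_sum : cr H = \sum_(C in comps H) comp_credit C + #|bridgesH H|%:R / 4%:R.
Proof.
rewrite (bigID (fun C => twoECb C (compE H C))) /=.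
rewrite (eq_bigr (credit2EC H)); last by move=> C /andP[_ tw]; rewrite /comp_credit tw.
rewrite [X in _ = _ + X + _](eq_bigr (fun C => 1 + #|blocks_of H C|%:R)); last first.
  by move=> C /andP[_ /negbTE tw]; rewrite /comp_credit tw.
have -> : \sum_(C in comps H | ~~ twoECb C (compE H C)) (1 + #|blocks_of H C|%:R) =
    #|[set C in comps H | ~~ twoECb C (compE H C)]|%:R
    + \sum_(C in comps H | ~~ twoECb C (compE H C)) #|blocks_of H C|%:R :> rat.
  rewrite big_split /= -sum1_card natr_sum; congr (_ + _).
  by apply: eq_bigl => C; rewrite inE.
by rewrite /cr; ring.
Qed.

Lemma cr_le :
  cr H <= 3%:R / 10%:R * (#|H|%:R - #|bridgesH H|%:R)
          + #|triangle_edges H|%:R / 30%:R + #|bridgesH H|%:R / 4%:R.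
Proof.
have := ler_sum (index_enum _) (fun C (hC : C \in comps H) => comp_credit_le hC).
rewrite big_split /= -mulr_sumr sumrB -big_mkcondr /= -mulr_suml -!natr_sum.
have := sum_compE_le; have := sum_triangle_compE_le; have := card_bridgesH_le.
rewrite -!(ler_nat rat) cr_sum; lra.
Qed.

End Credits.

Local Open Scope ring_scope.

Theorem lemma6 (T : finType) (E H : {set {set T}}) (b t : rat) :
  simple_edges E ->
  two_edge_cover E H ->
  canonical E H ->
  (#|bridgesH H|)%:R = b * (#|H|)%:R ->
  (#|triangle_edges H|)%:R = t * (#|H|)%:R ->
  cost H <= (13%:R / 10%:R + t / 30%:R - b / 20%:R) * (#|H|)%:R.
Proof.
move=> /forall_inP hE /andP[sHE /forallP hdeg] [_ hblock _] hb ht.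
have hE2 e : e \in H -> #|e| = 2%N by move/(subsetP sHE)/hE/eqP.
have := cr_le hE2 hdeg hblock; rewrite /cost hb ht; lra.
Qed.
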